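(* For non-negative integers $p_1,p_2$, integers $k_0,k_1,k_2$ and $x_1,x_2,y,z\in\mathbb{C}$, $$\sum_{j_1=0}^{p_1}\sum_{j_2=0}^{p_2}\binom{p_1}{j_1}\binom{p_2}{j_2}B^{(k_1)}_{p_1-j_1}(x_1-y)B^{(k_2)}_{p_2-j_2}(x_2-y)B^{(k_0)}_{j_1+j_2}(y)=\sum_{j_1=0}^{p_1}\sum_{j_2=0}^{p_2}\binom{p_1}{j_1}\binom{p_2}{j_2}B^{(k_1)}_{p_1-j_1}(x_1-z)B^{(k_2)}_{p_2-j_2}(x_2-z)B^{(k_0)}_{j_1+j_2}(z).$$ In particular, for $x\in\mathbb{C}$, $$\sum_{j_1=0}^{p_1}\sum_{j_2=0}^{p_2}\binom{p_1}{j_1}\binom{p_2}{j_2}B^{(k_1)}_{p_1-j_1}B^{(k_2)}_{p_2-j_2}B^{(k_0)}_{j_1+j_2}(x)=\sum_{j_1=0}^{p_1}\sum_{j_2=0}^{p_2}\binom{p_1}{j_1}\binom{p_2}{j_2}B^{(k_1)}_{p_1-j_1}(x)B^{(k_2)}_{p_2-j_2}(x)B^{(k_0)}_{j_1+j_2}.$$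
   Context: For an integer $k$, a non-negative integer $n$ and $x\in\mathbb{C}$, the poly-Bernoulli polynomial is $B_{n}^{(k)}(x)=\sum_{l=0}^{n}\frac{1}{(l+1)^{k}}\sum_{j=0}^{l}(-1)^{j}\binom{l}{j}(j+x)^{n}$, and the poly-Bernoulli number is $B_n^{(k)}=B_n^{(k)}(0)$. *)

From mathcomp Require Import all_boot all_order all_algebra.
From mathcomp Require Export complex Rstruct.
Set Implicit Arguments. Unset Strict Implicit. Unset Printing Implicit Defensive.
Import Order.TTheory GRing.Theory Num.Theory.
Local Open Scope ring_scope.

Definition C : numClosedFieldType := (Rdefinitions.R)[i].

(* Poly-Bernoulli polynomial B_n^{(k)}(x), k : int (1/(l+1)^k with an integer power). *)
Definition polyBern (k : int) (n : nat) (x : C) : C :=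
  \sum_(l < n.+1) (((l.+1)%:R : C) ^ k)^-1 *
     \sum_(j < l.+1) (-1) ^+ j * ('C(l, j))%:R * (j%:R + x) ^+ n.

Definition polyBernNum (k : int) (n : nat) : C := polyBern k n 0.

From mathcomp Require Import all_boot all_order all_algebra.
From mathcomp Require Import ring zify.
Set Implicit Arguments.
Unset Strict Implicit.
Unset Printing Implicit Defensive.
Import GRing.Theory.
Local Open Scope ring_scope.

(* The inner alternating sum of B_n^(k)(x) is an l-th finite difference of
   (j + x)^n, which vanishes for l > n; hence for all n < N the polynomials
   B_n^(k)(x) = sum_q w_q (u_q + x)^n are combinations of shifted powers with
   weights w indexed by pairs (l, j) < N that do not depend on n.  For single
   shifted powers the binomial theorem, applied in each variable, collapses
   the double sum to (a + x1 + c)^p1 (b + x2 + c)^p2, where y has cancelled;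
   the sum is trilinear, so the same holds for the combinations.  The second
   identity is the case x1 = x2 = y = x, z = 0. *)

Lemma sumr_ord_widen (R : nmodType) m N (F : nat -> R) : (m <= N)%N ->
  (forall i, (m <= i)%N -> F i = 0) -> \sum_(i < m) F i = \sum_(i < N) F i.
Proof.
move=> le_mN F0; rewrite (big_ord_widen _ F le_mN) big_mkcond /=.
by apply: eq_bigr => i _; case: ltnP => // /F0.
Qed.

Section FiniteDifference.

Variable R : comPzRingType.
Implicit Types (f g : nat -> R) (x : R).

(* Equal to (-1)^l times the l-th forward difference of f at 0. *)
Definition findiff (l : nat) f : R :=
  \sum_(j < l.+1) (-1) ^+ j * 'C(l, j)%:R * f j.

Lemma findiffS l f : findiff l.+1 f = findiff l f - findiff l (fun j => f j.+1).
Proof.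
rewrite /findiff [LHS]big_ord_recl [X in _ = X - _]big_ord_recl /=.
under eq_bigr => i _ do rewrite /bump /= add1n binS natrD exprS mulrDr !mulrDl.
under [X in _ = _ + X - _]eq_bigr => i _ do rewrite /bump /= add1n exprS.
rewrite big_split /= big_ord_recr /= (@bin_small l l.+1) // !bin0 mulr0 mul0r addr0.
rewrite -addrA; congr (_ + (_ + _)); rewrite -sumrN.
by apply: eq_bigr => i _; rewrite !mulN1r !mulNr.
Qed.

Lemma eq_findiff l f g : f =1 g -> findiff l f = findiff l g.
Proof. by move=> eq_fg; apply: eq_bigr => j _; rewrite eq_fg. Qed.

Lemma findiffB l f g :
  findiff l (fun j => f j - g j) = findiff l f - findiff l g.
Proof. by rewrite /findiff -sumrB; apply: eq_bigr => j _; rewrite mulrBr. Qed.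

Lemma findiffZ l c f : findiff l (fun j => c * f j) = c * findiff l f.
Proof. by rewrite /findiff mulr_sumr; apply: eq_bigr => j _; rewrite mulrCA. Qed.

Lemma findiff_sum l m (F : nat -> nat -> R) :
  findiff l (fun j => \sum_(i < m) F i j) = \sum_(i < m) findiff l (F i).
Proof.
by rewrite /findiff exchange_big; apply: eq_bigr => j _; rewrite mulr_sumr.
Qed.

Lemma findiff_expr l n x : (n < l)%N ->
  findiff l (fun j => (j%:R + x) ^+ n) = 0.
Proof.
elim: l n x => [//|l IHl] n x lt_nl.
have incr j : (j.+1%:R + x) ^+ n - (j%:R + x) ^+ n =
              \sum_(i < n) 'C(n, i)%:R * (j%:R + x) ^+ i.
  rewrite -addn1 natrD addrAC exprD1n big_ord_recr /= binn mulr1n addrK.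
  by apply: eq_bigr => i _; rewrite mulr_natl.
rewrite findiffS -opprB -findiffB (eq_findiff _ incr).
rewrite (findiff_sum _ _ (fun i j => 'C(n, i)%:R * (j%:R + x) ^+ i)) big1 ?oppr0 //.
by move=> i _; rewrite findiffZ IHl ?mulr0 // (leq_trans (ltn_ord i)).
Qed.

Lemma findiff_widen N l f : (l < N)%N ->
  findiff l f = \sum_(j < N) (-1) ^+ j * 'C(l, j)%:R * f j.
Proof.
move=> lt_lN; apply: (sumr_ord_widen (F := fun j => _ * 'C(l, j)%:R * f j)) => // j.
by move=> /bin_small ->; rewrite mulr0 mul0r.
Qed.

End FiniteDifference.

Section ShiftedPowerSums.

Variable R : comPzRingType.

Definition powsum (I : finType) (w u : I -> R) (n : nat) (x : R) : R :=
  \sum_i w i * (u i + x) ^+ n.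

Definition binom_conv (f1 f2 f0 : nat -> R -> R) (p1 p2 : nat) (x1 x2 y : R) : R :=
  \sum_(j1 < p1.+1) \sum_(j2 < p2.+1)
    'C(p1, j1)%:R * 'C(p2, j2)%:R *
    f1 (p1 - j1)%N (x1 - y) * f2 (p2 - j2)%N (x2 - y) * f0 (j1 + j2)%N y.

Lemma binom_conv_expr (a b c : R) p1 p2 x1 x2 y :
  binom_conv (fun n t => (a + t) ^+ n) (fun n t => (b + t) ^+ n)
             (fun n t => (c + t) ^+ n) p1 p2 x1 x2 y
  = (a + x1 + c) ^+ p1 * (b + x2 + c) ^+ p2.
Proof.
have split_y d x : d + x + c = (d + (x - y)) + (c + y).
  by rewrite [c + y]addrC !addrA subrK.
rewrite !split_y !exprDn big_distrlr /=; apply: eq_bigr => j1 _.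
apply: eq_bigr => j2 _; rewrite exprD.
move: (_ ^+ (p1 - j1)) (_ ^+ (p2 - j2)) ((c + y) ^+ j1) ((c + y) ^+ j2) => v1 v2 z1 z2.
ring.
Qed.

Lemma mulr_sum3 (I J K : finType) (a : R) (A : I -> R) (B : J -> R) (D : K -> R) :
  a * (\sum_i A i) * (\sum_j B j) * (\sum_k D k) =
  \sum_i \sum_j \sum_k a * A i * B j * D k.
Proof.
rewrite [a * _]big_distrr !big_distrl /=; apply: eq_bigr => i _.
rewrite big_distrr exchange_big /=; apply: eq_bigr => k _.
by rewrite big_distrr big_distrl.
Qed.

Lemma binom_conv_powsum (I1 I2 I0 : finType) (w1 u1 : I1 -> R) (w2 u2 : I2 -> R)
    (w0 u0 : I0 -> R) p1 p2 x1 x2 y :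
  binom_conv (powsum w1 u1) (powsum w2 u2) (powsum w0 u0) p1 p2 x1 x2 y =
  \sum_q1 \sum_q2 \sum_q0 w1 q1 * w2 q2 * w0 q0 *
    ((u1 q1 + x1 + u0 q0) ^+ p1 * (u2 q2 + x2 + u0 q0) ^+ p2).
Proof.
rewrite /binom_conv /powsum.
under eq_bigr => j1 _ do under eq_bigr => j2 _ do rewrite mulr_sum3.
under eq_bigr => j1 _ do rewrite exchange_big.
rewrite exchange_big; apply: eq_bigr => q1 _.
under eq_bigr => j1 _ do rewrite exchange_big.
rewrite exchange_big; apply: eq_bigr => q2 _.
under eq_bigr => j1 _ do rewrite exchange_big.
rewrite exchange_big; apply: eq_bigr => q0 _.
rewrite -(binom_conv_expr _ _ _ _ _ _ _ y) /binom_conv big_distrr; apply: eq_bigr => j1 _.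
rewrite big_distrr /=; apply: eq_bigr => j2 _.
move: (_ ^+ (p1 - j1)) (_ ^+ (p2 - j2)) (_ ^+ (j1 + j2)) => v1 v2 v0.
ring.
Qed.

End ShiftedPowerSums.

Definition polyBern_weight (k : int) {N : nat} (q : 'I_N * 'I_N) : C :=
  (((q.1.+1)%:R : C) ^ k)^-1 * ((-1) ^+ q.2 * 'C(q.1, q.2)%:R).

Lemma polyBern_powsum k N n x : (n < N)%N ->
  polyBern k n x = powsum (polyBern_weight k) (fun q : 'I_N * 'I_N => (q.2 : nat)%:R) n x.
Proof.
move=> lt_nN; rewrite /polyBern.
under eq_bigr => l _ do rewrite -/(findiff l (fun j => (j%:R + x) ^+ n)).
pose c l := (((l.+1)%:R : C) ^ k)^-1.
rewrite (sumr_ord_widen (F := fun l => c l * findiff l (fun j => (j%:R + x) ^+ n)) lt_nN);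
  last by move=> l lt_nl; rewrite findiff_expr ?mulr0.
under eq_bigr => l _ do rewrite (findiff_widen _ (ltn_ord l)) big_distrr /=.
by rewrite pair_big /=; apply: eq_bigr => q _; rewrite mulrA.
Qed.

Theorem mainTheorem10 (p1 p2 : nat) (k0 k1 k2 : int) :
  (forall x1 x2 y z : C,
    \sum_(j1 < p1.+1) \sum_(j2 < p2.+1)
      ('C(p1, j1))%:R * ('C(p2, j2))%:R *
      polyBern k1 (p1 - j1) (x1 - y) * polyBern k2 (p2 - j2) (x2 - y) *
      polyBern k0 (j1 + j2) y
    =
    \sum_(j1 < p1.+1) \sum_(j2 < p2.+1)
      ('C(p1, j1))%:R * ('C(p2, j2))%:R *
      polyBern k1 (p1 - j1) (x1 - z) * polyBern k2 (p2 - j2) (x2 - z) *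
      polyBern k0 (j1 + j2) z)
  /\
  (forall x : C,
    \sum_(j1 < p1.+1) \sum_(j2 < p2.+1)
      ('C(p1, j1))%:R * ('C(p2, j2))%:R *
      polyBernNum k1 (p1 - j1) * polyBernNum k2 (p2 - j2) *
      polyBern k0 (j1 + j2) x
    =
    \sum_(j1 < p1.+1) \sum_(j2 < p2.+1)
      ('C(p1, j1))%:R * ('C(p2, j2))%:R *
      polyBern k1 (p1 - j1) x * polyBern k2 (p2 - j2) x *
      polyBernNum k0 (j1 + j2)).
Proof.
pose N := (p1 + p2).+1; pose u (q : 'I_N * 'I_N) : C := (q.2 : nat)%:R.
have conv_powsum x1 x2 y :
    binom_conv (polyBern k1) (polyBern k2) (polyBern k0) p1 p2 x1 x2 y =
    binom_conv (powsum (polyBern_weight k1) u) (powsum (polyBern_weight k2) u)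
               (powsum (polyBern_weight k0) u) p1 p2 x1 x2 y.
  apply: eq_bigr => j1 _; apply: eq_bigr => j2 _.
  have [lt_j1 lt_j2] := (ltn_ord j1, ltn_ord j2).
  by rewrite !(polyBern_powsum _ (N := N)) //; rewrite /N; lia.
have binom_conv_shift x1 x2 y z :
    binom_conv (polyBern k1) (polyBern k2) (polyBern k0) p1 p2 x1 x2 y =
    binom_conv (polyBern k1) (polyBern k2) (polyBern k0) p1 p2 x1 x2 z.
  by rewrite !conv_powsum !binom_conv_powsum.
split=> [|x]; first exact: binom_conv_shift.
by have := binom_conv_shift x x x 0; rewrite /binom_conv subrr subr0.
Qed.
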